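(* Let $X$ be a separated locally convex space and $g\colon X\to\mathbb R^{\vartriangle}$ closed and convex (possibly improper). Then $g^{**}=g$, where $$g^{**}(x)=\sup_{(\xi,r)\in X^{\vartriangle}\times\mathbb R}\big(\xi_r(x)-^{\vartriangle}g^*(\xi,r)\big),\quad x\in X.$$
   Context: $\overline{\mathbb R}=\mathbb R\cup\{\pm\infty\}$ with usual order; inf-addition $r+^{\vartriangle}s=\inf\{a+b: a,b\in\mathbb R, r\leq a, s\leq b\}$; inf-difference $r-^{\vartriangle}s=\min\{t: r\leq s+^{\vartriangle}t\}$. $\mathbb R^{\vartriangle}$ is $\overline{\mathbb R}$ with $+^{\vartriangle}$; $g$ convex means $g(tx_1+(1-t)x_2)\leq tg(x_1)+^{\vartriangle}(1-t)g(x_2)$ for $t\in(0,1)$; closed means $\operatorname{epi}g=\{(x,r)\in X\times\mathbb R: g(x)\leq r\}$ is closed. For $x^*\in X^*$, $r\in\mathbb R$: $x^*_r(x)=x^*(x)-r$; $\hat x^*_r(x)=-\infty$ if $x^*(x)-r\leq0$, $+\infty$ otherwise; $\hat x^*=\hat x^*_0$; $X^{\vartriangle}=X^*\cup\{\hat x^*: x^*\in X^*\}$; $\xi_r=x^*_r$ if $\xi=x^*$, $\xi_r=\hat x^*_r$ if $\xi=\hat x^*$. Conjugate: $g^*(\xi,r)=\sup_{x\in X}(\xi_r(x)-^{\vartriangle}g(x))$ for $(\xi,r)\in X^{\vartriangle}\times\mathbb R$. *)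

From Stdlib Require Import Reals Lra Classical ClassicalEpsilon.
Open Scope R_scope.

Inductive Rbar : Type := Fin (r : R) | PInf | MInf.

Definition Rbar_le (u v : Rbar) : Prop :=
  match u, v with
  | MInf, _ => True
  | _, PInf => True
  | Fin a, Fin b => a <= b
  | _, _ => False
  end.

(* inf-addition  r +^▵ s = inf { a + b : a,b ∈ R, r <= a, s <= b }
   (written out by cases; see Rbar_iadd_is_glb below for the proof that
   this is exactly that infimum). *)
Definition Rbar_iadd (u v : Rbar) : Rbar :=
  match u, v with
  | PInf, _ => PInf
  | _, PInf => PInf
  | MInf, _ => MInf
  | _, MInf => MInf
  | Fin a, Fin b => Fin (a + b)
  end.

(* inf-difference  r -^▵ s = min { t : r <= s +^▵ t }
   (written out by cases; see Rbar_idiff_is_min below). *)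
Definition Rbar_idiff (u v : Rbar) : Rbar :=
  match v, u with
  | PInf, _ => MInf
  | MInf, MInf => MInf
  | MInf, _ => PInf
  | Fin _, MInf => MInf
  | Fin _, PInf => PInf
  | Fin b, Fin a => Fin (a - b)
  end.

Definition Rbar_pmult (t : R) (u : Rbar) : Rbar :=
  match u with
  | Fin a => Fin (t * a)
  | PInf => PInf
  | MInf => MInf
  end.

Definition Rbar_is_lub (S : Rbar -> Prop) (m : Rbar) : Prop :=
  (forall v, S v -> Rbar_le v m) /\
  (forall u, (forall v, S v -> Rbar_le v u) -> Rbar_le m u).

Definition Rbar_is_glb (S : Rbar -> Prop) (m : Rbar) : Prop :=
  (forall v, S v -> Rbar_le m v) /\
  (forall u, (forall v, S v -> Rbar_le u v) -> Rbar_le u m).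

(* supremum of a set of extended reals (it always exists, in the complete
   lattice R-bar; sup of the empty set is -∞). *)
Definition Rbar_sup (S : Rbar -> Prop) : Rbar :=
  epsilon (inhabits MInf) (fun m => Rbar_is_lub S m).

Lemma Rbar_iadd_is_glb (r s : Rbar) :
  Rbar_is_glb (fun v => exists a b : R,
                  v = Fin (a + b) /\ Rbar_le r (Fin a) /\ Rbar_le s (Fin b))
              (Rbar_iadd r s).
Proof.
  split.
  - intros v [a [b [-> [Ha Hb]]]].
    destruct r, s; simpl in *; try tauto; lra.
  - intros u Hu.
    destruct r as [a| |], s as [b| |]; simpl; try exact I;
      try (destruct u; simpl; trivial; fail).
    + specialize (Hu (Fin (a + b)) (ex_intro _ a (ex_intro _ b
        (conj eq_refl (conj (Rle_refl a) (Rle_refl b)))))).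
      exact Hu.
    +
      destruct u as [c| |]; simpl; trivial.
      * specialize (Hu (Fin (a + (c - a - 1))) (ex_intro _ a (ex_intro _ (c - a - 1)
          (conj eq_refl (conj (Rle_refl a) I))))). simpl in Hu. lra.
      * specialize (Hu (Fin (a + 0)) (ex_intro _ a (ex_intro _ 0
          (conj eq_refl (conj (Rle_refl a) I))))). exact Hu.
    + destruct u as [c| |]; simpl; trivial.
      * specialize (Hu (Fin ((c - b - 1) + b)) (ex_intro _ (c - b - 1) (ex_intro _ b
          (conj eq_refl (conj I (Rle_refl b)))))). simpl in Hu. lra.
      * specialize (Hu (Fin (0 + b)) (ex_intro _ 0 (ex_intro _ b
          (conj eq_refl (conj I (Rle_refl b)))))). exact Hu.
    + destruct u as [c| |]; simpl; trivial.
      * specialize (Hu (Fin ((c - 1) + 0)) (ex_intro _ (c - 1) (ex_intro _ 0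
          (conj eq_refl (conj I I))))). simpl in Hu. lra.
      * specialize (Hu (Fin (0 + 0)) (ex_intro _ 0 (ex_intro _ 0
          (conj eq_refl (conj I I))))). exact Hu.
Qed.

Lemma Rbar_idiff_is_min (r s : Rbar) :
  Rbar_le r (Rbar_iadd s (Rbar_idiff r s)) /\
  (forall t, Rbar_le r (Rbar_iadd s t) -> Rbar_le (Rbar_idiff r s) t).
Proof.
  split.
  - destruct r as [a| |], s as [b| |]; simpl; trivial; lra.
  - intros t Ht.
    destruct r as [a| |], s as [b| |], t as [c| |]; simpl in *; trivial; lra.
Qed.

Record LCS : Type := {
  car :> Type;
  zero : car;
  add : car -> car -> car;
  opp : car -> car;
  scal : R -> car -> car;
  add_assoc : forall x y z, add x (add y z) = add (add x y) z;
  add_comm : forall x y, add x y = add y x;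
  add_zero : forall x, add zero x = x;
  add_opp : forall x, add x (opp x) = zero;
  scal_one : forall x, scal 1 x = x;
  scal_assoc : forall a b x, scal a (scal b x) = scal (a * b) x;
  scal_distr_r : forall a x y, scal a (add x y) = add (scal a x) (scal a y);
  scal_distr_l : forall a b x, scal (a + b) x = add (scal a x) (scal b x);
  is_open : (car -> Prop) -> Prop;
  open_full : is_open (fun _ => True);
  open_inter : forall U V, is_open U -> is_open V ->
                 is_open (fun x => U x /\ V x);
  open_union : forall F : (car -> Prop) -> Prop,
                 (forall U, F U -> is_open U) ->
                 is_open (fun x => exists U, F U /\ U x);
  add_cont : forall U x y, is_open U -> U (add x y) ->
               exists V W, is_open V /\ is_open W /\ V x /\ W y /\
                 (forall x' y', V x' -> W y' -> U (add x' y'));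
  scal_cont : forall U a x, is_open U -> U (scal a x) ->
               exists d V, 0 < d /\ is_open V /\ V x /\
                 (forall a' x', Rabs (a' - a) < d -> V x' -> U (scal a' x'));
  locally_convex : forall U x, is_open U -> U x ->
               exists V, is_open V /\ V x /\ (forall y, V y -> U y) /\
                 (forall y z t, 0 <= t <= 1 -> V y -> V z ->
                    V (add (scal t y) (scal (1 - t) z)));
  separated : forall x y, x <> y ->
               exists U V, is_open U /\ is_open V /\ U x /\ V y /\
                 (forall z, U z -> V z -> False)
}.

Arguments zero {_}.
Arguments add {_} _ _.
Arguments opp {_} _.
Arguments scal {_} _ _.
Arguments is_open {_} _.

Record dual (X : LCS) : Type := {
  dfun :> X -> R;
  dfun_add : forall x y, dfun (add x y) = dfun x + dfun y;
  dfun_scal : forall a x, dfun (scal a x) = a * dfun x;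
  dfun_cont : forall x eps, 0 < eps ->
      exists U, is_open U /\ U x /\
        (forall y, U y -> Rabs (dfun y - dfun x) < eps)
}.

Inductive dualtri (X : LCS) : Type :=
  | Plain (f : dual X)
  | Hat (f : dual X).
Arguments Plain {X} f.
Arguments Hat {X} f.

Definition xi_r {X : LCS} (xi : dualtri X) (r : R) (x : X) : Rbar :=
  match xi with
  | Plain f => Fin (f x - r)
  | Hat f => if Rle_dec (f x - r) 0 then MInf else PInf
  end.

(* epi g = {(x,r) ∈ X × R : g x <= r} is closed in X × R (product topology) *)
Definition closed_fun {X : LCS} (g : X -> Rbar) : Prop :=
  forall (x : X) (r : R), ~ Rbar_le (g x) (Fin r) ->
    exists U d, is_open U /\ U x /\ 0 < d /\
      (forall y s, U y -> Rabs (s - r) < d -> ~ Rbar_le (g y) (Fin s)).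

Definition convex_fun {X : LCS} (g : X -> Rbar) : Prop :=
  forall (x1 x2 : X) (t : R), 0 < t < 1 ->
    Rbar_le (g (add (scal t x1) (scal (1 - t) x2)))
            (Rbar_iadd (Rbar_pmult t (g x1)) (Rbar_pmult (1 - t) (g x2))).

Definition conj_fun {X : LCS} (g : X -> Rbar) (xi : dualtri X) (r : R) : Rbar :=
  Rbar_sup (fun v => exists x : X, v = Rbar_idiff (xi_r xi r x) (g x)).

Definition biconj_fun {X : LCS} (g : X -> Rbar) (x : X) : Rbar :=
  Rbar_sup (fun v => exists (xi : dualtri X) (r : R),
                       v = Rbar_idiff (xi_r xi r x) (conj_fun g xi r)).

From Stdlib Require Import Reals Lra Classical ClassicalEpsilon.
From mathcomp Require classical_sets.
Open Scope R_scope.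

(* One inequality is the Fenchel-Young inequality.  For the other, let
   g(x0) > rho.  The point (x0, rho) lies outside the closed convex epigraph,
   so a geometric Hahn-Banach argument (one-dimensional extensions and Zorn's
   lemma, applied to the epigraph thickened by a convex neighbourhood of
   (x0, rho)) yields a closed hyperplane f(x) + a s = c strictly separating
   them.  If a < 0 it gives an affine minorant x*_r of g exceeding rho at x0;
   if a = 0 the hyperplane is vertical and \hat f_c, which is -oo on dom g,
   has conjugate -oo, so its term in g**(x0) is +oo; a > 0 is impossible
   once the epigraph is nonempty, and for an empty epigraph every conjugate
   is -oo.  The functionals \hat x* are what make the formula valid for
   improper g. *)

Lemma Rbar_le_trans (u v w : Rbar) : Rbar_le u v -> Rbar_le v w -> Rbar_le u w.
Proof. destruct u, v, w; simpl; intros; try tauto; lra. Qed.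

Lemma Rbar_le_antisym (u v : Rbar) : Rbar_le u v -> Rbar_le v u -> u = v.
Proof. destruct u, v; simpl; intros; try tauto. f_equal. lra. Qed.

Lemma Rbar_le_MInf (u : Rbar) : Rbar_le u MInf -> u = MInf.
Proof. destruct u; simpl; tauto. Qed.

Lemma Rbar_idiff_le_swap (u v c : Rbar) :
  Rbar_le (Rbar_idiff u v) c -> Rbar_le (Rbar_idiff u c) v.
Proof. destruct u, v, c; simpl; intros; try tauto; lra. Qed.

Lemma Rbar_not_le_between (u v : Rbar) :
  ~ Rbar_le u v -> exists rho, ~ Rbar_le u (Fin rho) /\ Rbar_le v (Fin rho).
Proof.
  destruct u as [a| |], v as [b| |]; simpl; intros H; try tauto.
  - exists b. simpl. lra.
  - exists (a - 1). lra.
  - exists b. lra.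
  - exists 0. tauto.
Qed.

Lemma Rbar_lub_ex (S : Rbar -> Prop) : exists m, Rbar_is_lub S m.
Proof.
  destruct (classic (S PInf)) as [HP|HP].
  { exists PInf; split; [intros v _; destruct v; simpl; trivial|].
    intros u Hu; exact (Hu _ HP). }
  destruct (classic (exists r, S (Fin r))) as [[r0 Hr0]|HF].
  - destruct (classic (bound (fun r => S (Fin r)))) as [Hb|Hb].
    + destruct (completeness _ Hb (ex_intro _ r0 Hr0)) as [l [Hl1 Hl2]].
      exists (Fin l); split.
      * intros [a| |] Hv; simpl; trivial; [now apply Hl1|tauto].
      * intros [b| |] Hu; simpl; trivial.
        -- apply Hl2. intros x Hx. exact (Hu (Fin x) Hx).
        -- exact (Hu (Fin r0) Hr0).
    + exists PInf; split; [intros v _; destruct v; simpl; trivial|].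
      intros [b| |] Hu; simpl; trivial.
      * apply Hb. exists b. intros x Hx. exact (Hu (Fin x) Hx).
      * exact (Hu (Fin r0) Hr0).
  - exists MInf; split.
    + intros [a| |] Hv; simpl; trivial; [apply HF; eauto|tauto].
    + intros u _; exact I.
Qed.

Lemma Rbar_sup_spec (S : Rbar -> Prop) : Rbar_is_lub S (Rbar_sup S).
Proof. unfold Rbar_sup. apply epsilon_spec, Rbar_lub_ex. Qed.

Lemma Rbar_sup_ub (S : Rbar -> Prop) (v : Rbar) : S v -> Rbar_le v (Rbar_sup S).
Proof. apply (proj1 (Rbar_sup_spec S)). Qed.

Lemma Rbar_sup_least (S : Rbar -> Prop) (u : Rbar) :
  (forall v, S v -> Rbar_le v u) -> Rbar_le (Rbar_sup S) u.
Proof. apply (proj2 (Rbar_sup_spec S)). Qed.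

Lemma R_interpolate (A B : R -> Prop) :
  (exists a, A a) -> (exists b, B b) -> (forall a b, A a -> B b -> a <= b) ->
  exists l, (forall a, A a -> a <= l) /\ (forall b, B b -> l <= b).
Proof.
  intros [a0 Ha0] [b0 Hb0] HAB.
  assert (Hbd : bound A) by (exists b0; intros x Hx; exact (HAB x b0 Hx Hb0)).
  destruct (completeness A Hbd (ex_intro _ a0 Ha0)) as [l [Hl1 Hl2]].
  exists l. split; [exact Hl1|]. intros b Hb. apply Hl2. intros x Hx. exact (HAB x b Hx Hb).
Qed.

Lemma Rdiv_le_cross (a b s t : R) : 0 < s -> 0 < t -> a * t <= b * s -> a / s <= b / t.
Proof.
  intros Hs Ht H.
  replace (a / s) with ((a * t) * / (s * t)) by (field; lra).
  replace (b / t) with ((b * s) * / (s * t)) by (field; lra).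
  apply Rmult_le_compat_r; [left; apply Rinv_0_lt_compat; nra|exact H].
Qed.

Lemma Rconvex_lt (a b t d : R) : 0 <= t <= 1 -> a < d -> b < d -> t * a + (1 - t) * b < d.
Proof. intros Ht Ha Hb. destruct (Rle_dec a b); nra. Qed.

Lemma Rabs_lt_iff (a d : R) : Rabs a < d <-> - d < a < d.
Proof.
  split; [intros H; destruct (Rabs_def2 _ _ H); lra|].
  intros [H1 H2]. apply Rabs_def1; lra.
Qed.

Record VS : Type := {
  vT :> Type;
  v0 : vT;
  vadd : vT -> vT -> vT;
  vopp : vT -> vT;
  vscal : R -> vT -> vT;
  vadd_assoc : forall x y z, vadd x (vadd y z) = vadd (vadd x y) z;
  vadd_comm : forall x y, vadd x y = vadd y x;
  vadd_zero : forall x, vadd v0 x = x;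
  vadd_opp : forall x, vadd x (vopp x) = v0;
  vscal_one : forall x, vscal 1 x = x;
  vscal_assoc : forall a b x, vscal a (vscal b x) = vscal (a * b) x;
  vscal_distr_r : forall a x y, vscal a (vadd x y) = vadd (vscal a x) (vscal a y);
  vscal_distr_l : forall a b x, vscal (a + b) x = vadd (vscal a x) (vscal b x)
}.
Arguments v0 {_}.
Arguments vadd {_} _ _.
Arguments vopp {_} _.
Arguments vscal {_} _ _.

Definition VS_of_LCS (X : LCS) : VS :=
  Build_VS (car X) zero add opp scal (add_assoc X) (add_comm X) (add_zero X)
    (add_opp X) (scal_one X) (scal_assoc X) (scal_distr_r X) (scal_distr_l X).

Definition VS_prodR (E : VS) : VS.
Proof.
  refine (Build_VS (E * R) (v0, 0)
    (fun p q => (vadd (fst p) (fst q), snd p + snd q))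
    (fun p => (vopp (fst p), - snd p))
    (fun a p => (vscal a (fst p), a * snd p)) _ _ _ _ _ _ _ _);
  repeat intros []; intros; simpl; f_equal;
    auto using vadd_assoc, vadd_comm, vadd_zero, vadd_opp, vscal_one,
      vscal_assoc, vscal_distr_r, vscal_distr_l; ring.
Defined.

Definition vcomb {E : VS} (t : R) (a b : E) : E := vadd (vscal t a) (vscal (1 - t) b).

Section VectorSpaceFacts.
Variable E : VS.
Implicit Types (x y u : E) (a b t : R).

Lemma vadd_0r x : vadd x v0 = x.
Proof. rewrite vadd_comm. apply vadd_zero. Qed.

Lemma vadd_cancel_l x y u : vadd x y = vadd x u -> y = u.
Proof.
  intros H. rewrite <- (vadd_zero E y), <- (vadd_zero E u), <- (vadd_opp E x),
    (vadd_comm E x (vopp x)), <- !vadd_assoc, H. reflexivity.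
Qed.

Lemma vscal_0l x : vscal 0 x = v0.
Proof.
  apply (vadd_cancel_l (vscal 0 x)). rewrite vadd_0r, <- vscal_distr_l, Rplus_0_r.
  reflexivity.
Qed.

Lemma vscal_0r a : vscal a (@v0 E) = v0.
Proof. rewrite <- (vscal_0l v0), vscal_assoc, Rmult_0_r. reflexivity. Qed.

Lemma vopp_scal x : vopp x = vscal (-1) x.
Proof.
  apply (vadd_cancel_l x). rewrite vadd_opp.
  rewrite <- (vscal_one E x) at 1. rewrite <- vscal_distr_l, Rplus_opp_r, vscal_0l.
  reflexivity.
Qed.

Lemma vaddAC x y u : vadd (vadd x y) u = vadd (vadd x u) y.
Proof. rewrite <- !vadd_assoc, (vadd_comm E y u). reflexivity. Qed.

Lemma vaddACA x y u (w : E) : vadd (vadd x y) (vadd u w) = vadd (vadd x u) (vadd y w).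
Proof. rewrite !vadd_assoc, (vaddAC x y u). reflexivity. Qed.

Lemma vaddNK x u : vadd (vadd x (vopp u)) u = x.
Proof. rewrite <- vadd_assoc, (vadd_comm E (vopp u) u), vadd_opp. apply vadd_0r. Qed.

Lemma vadd_scalK x y t : vadd (vadd x (vscal t y)) (vscal (- t) y) = x.
Proof.
  rewrite <- vadd_assoc, <- vscal_distr_l, Rplus_opp_r, vscal_0l. apply vadd_0r.
Qed.

Lemma vcombDD t x y u (w : E) : vcomb t (vadd x y) (vadd u w) = vadd (vcomb t x u) (vcomb t y w).
Proof. unfold vcomb. rewrite !vscal_distr_r. apply vaddACA. Qed.

Lemma vcombxx t x : vcomb t x x = x.
Proof.
  unfold vcomb. rewrite <- vscal_distr_l. replace (t + (1 - t)) with 1 by ring.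
  apply vscal_one.
Qed.

Lemma vcomb_scal t a b x : vcomb t (vscal a x) (vscal b x) = vscal (t * a + (1 - t) * b) x.
Proof. unfold vcomb. rewrite !vscal_assoc, vscal_distr_l. reflexivity. Qed.

End VectorSpaceFacts.

Section HahnBanach.
Variables (E : VS) (K : E -> Prop) (z : E).
Hypothesis K_convex : forall a b t, 0 <= t <= 1 -> K a -> K b -> K (vcomb t a b).
Hypothesis K_absorbing : forall e, exists t, 0 < t /\ K (vscal t e).
Hypothesis z_notin_K : ~ K z.

(* Partial functionals are represented by their graphs, so that a chain of
   extensions is glued together by taking the union. *)
Record admissible (G : E * R -> Prop) : Prop := {
  adm_fun : forall e v1 v2, G (e, v1) -> G (e, v2) -> v1 = v2;
  adm_lin : forall e1 v1 e2 v2 a, G (e1, v1) -> G (e2, v2) ->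
              G (vadd e1 (vscal a e2), v1 + a * v2);
  adm_line : forall t, G (vscal t z, t);
  adm_bound : forall e v, G (e, v) -> K e -> v <= 1
}.

Lemma K_zero : K v0.
Proof. destruct (K_absorbing v0) as [t [_ H]]. rewrite vscal_0r in H. exact H. Qed.

Lemma adm_zero G : admissible G -> G (v0, 0).
Proof. intros HG. pose proof (adm_line G HG 0) as H. rewrite vscal_0l in H. exact H. Qed.

Lemma adm_scal G e v a : admissible G -> G (e, v) -> G (vscal a e, a * v).
Proof.
  intros HG He. pose proof (adm_lin G HG _ _ _ _ a (adm_zero G HG) He) as H.
  rewrite vadd_zero, Rplus_0_l in H. exact H.
Qed.

Lemma line_admissible : admissible (fun p => exists t, p = (vscal t z, t)).
Proof.
  split.
  - intros e v1 v2 [t1 E1] [t2 E2]. injection E1 as E1 ->. injection E2 as E2 ->.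
    apply NNPP. intros Hne. apply z_notin_K.
    assert (H : vscal (t1 - t2) z = v0).
    { unfold Rminus. rewrite vscal_distr_l, <- E1, E2, <- vscal_distr_l, Rplus_opp_r.
      apply vscal_0l. }
    rewrite <- (vscal_one E z), <- (Rinv_l (t1 - t2)), <- vscal_assoc, H, vscal_0r by lra.
    exact K_zero.
  - intros e1 v1 e2 v2 a [t1 E1] [t2 E2]. injection E1 as -> ->. injection E2 as -> ->.
    exists (t1 + a * t2). rewrite vscal_assoc, <- vscal_distr_l. reflexivity.
  - intros t. exists t. reflexivity.
  - intros e v [t Et] HK. injection Et as -> ->.
    destruct (Rle_or_lt t 1) as [|Ht]; [assumption|exfalso].
    apply z_notin_K.
    assert (Hi : 0 <= / t <= 1).
    { split; [left; apply Rinv_0_lt_compat; lra|].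
      rewrite <- Rinv_1. apply Rinv_le_contravar; lra. }
    pose proof (K_convex _ _ _ Hi HK K_zero) as H. unfold vcomb in H.
    rewrite vscal_0r, vadd_0r, vscal_assoc, Rinv_l, vscal_one in H by lra. exact H.
Qed.

Section Extension.
Variables (G : E * R -> Prop) (y : E).
Hypothesis HG : admissible G.

(* Convexity of K, applied on the segment from [m1 - s y] to [m2 + t y],
   which crosses the domain of [G]. *)
Lemma slope_compat m1 w1 m2 w2 s t : 0 < s -> 0 < t -> G (m1, w1) -> G (m2, w2) ->
  K (vadd m1 (vscal (- s) y)) -> K (vadd m2 (vscal t y)) -> t * w1 + s * w2 <= s + t.
Proof.
  intros Hs Ht G1 G2 K1 K2.
  set (l := t / (s + t)).
  assert (Hl : 0 <= l <= 1).
  { unfold l. split; [apply Rlt_le, Rdiv_lt_0_compat; lra|].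
    apply Rmult_le_reg_r with (s + t); [lra|].
    unfold Rdiv. rewrite Rmult_assoc, Rinv_l; lra. }
  pose proof (K_convex _ _ l Hl K1 K2) as HK.
  rewrite vcombDD, vcomb_scal in HK.
  replace (l * - s + (1 - l) * t) with 0 in HK by (unfold l; field; lra).
  rewrite vscal_0l, vadd_0r in HK.
  assert (HGc : G (vcomb l m1 m2, l * w1 + (1 - l) * w2)).
  { apply (adm_lin G HG); [apply adm_scal|]; assumption. }
  pose proof (adm_bound G HG _ _ HGc HK) as Hle.
  replace (t * w1 + s * w2) with ((s + t) * (l * w1 + (1 - l) * w2)) by (unfold l; field; lra).
  replace (s + t) with ((s + t) * 1) at 2 by ring.
  apply Rmult_le_compat_l; lra.
Qed.

Lemma extension_slope_exists : exists al, forall m w t, G (m, w) -> K (vadd m (vscal t y)) ->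
  w + t * al <= 1.
Proof.
  destruct (R_interpolate
    (fun a => exists m w s, 0 < s /\ G (m, w) /\ K (vadd m (vscal (- s) y)) /\ a = (w - 1) / s)
    (fun b => exists m w t, 0 < t /\ G (m, w) /\ K (vadd m (vscal t y)) /\ b = (1 - w) / t))
    as [al [HA HB]].
  - destruct (K_absorbing (vscal (-1) y)) as [t [Ht HK]].
    rewrite vscal_assoc in HK. replace (t * -1) with (- t) in HK by ring.
    exists ((0 - 1) / t), v0, 0, t. rewrite vadd_zero.
    repeat split; [assumption|exact (adm_zero G HG)|assumption].
  - destruct (K_absorbing y) as [t [Ht HK]].
    exists ((1 - 0) / t), v0, 0, t. rewrite vadd_zero.
    repeat split; [assumption|exact (adm_zero G HG)|assumption].
  - intros a b [m1 [w1 [s [Hs [G1 [K1 ->]]]]]] [m2 [w2 [t [Ht [G2 [K2 ->]]]]]].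
    apply Rdiv_le_cross; [assumption|assumption|].
    pose proof (slope_compat m1 w1 m2 w2 s t Hs Ht G1 G2 K1 K2). lra.
  - exists al. intros m w t Gm HK.
    destruct (Rtotal_order t 0) as [Hn|[H0|Hp]].
    + assert (Ha : (w - 1) / - t <= al).
      { apply HA. exists m, w, (- t). rewrite Ropp_involutive.
        repeat split; [lra|assumption|assumption]. }
      assert (Hx : (w - 1) / - t * - t = w - 1) by (field; lra).
      nra.
    + subst t. rewrite vscal_0l, vadd_0r in HK. pose proof (adm_bound G HG _ _ Gm HK). lra.
    + assert (Hb : al <= (1 - w) / t).
      { apply HB. exists m, w, t. repeat split; assumption. }
      assert (Hx : (1 - w) / t * t = 1 - w) by (field; lra).
      nra.
Qed.

Lemma line_meets_dom m w m' w' t t' : G (m, w) -> G (m', w') ->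
  vadd m (vscal t y) = vadd m' (vscal t' y) -> t <> t' -> exists v, G (y, v).
Proof.
  intros Gm Gm' Heq Ht.
  assert (HD : vadd m' (vscal (-1) m) = vscal (t - t') y).
  { apply (vadd_cancel_l E m).
    rewrite (vadd_comm E m'), vadd_assoc, <- (vscal_one E m) at 1.
    rewrite <- vscal_distr_l, Rplus_opp_r, vscal_0l, vadd_zero.
    unfold Rminus. rewrite vscal_distr_l, vadd_assoc, Heq. symmetry. apply vadd_scalK. }
  pose proof (adm_scal G _ _ (/ (t - t')) HG (adm_lin G HG _ _ _ _ (-1) Gm' Gm)) as HGy.
  rewrite HD, vscal_assoc, Rinv_l, vscal_one in HGy by lra.
  eauto.
Qed.

Lemma admissible_extend : ~ (exists v, G (y, v)) ->
  exists G', (forall p, G p -> G' p) /\ admissible G' /\ exists v, G' (y, v).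
Proof.
  intros Hy. destruct extension_slope_exists as [al Hal].
  exists (fun p => exists m w t, G (m, w) /\ p = (vadd m (vscal t y), w + t * al)).
  split; [|split].
  - intros [e v] He. exists e, v, 0. split; [assumption|].
    rewrite vscal_0l, vadd_0r, Rmult_0_l, Rplus_0_r. reflexivity.
  - split.
    + intros e v1 v2 [m [w [t [Gm Em]]]] [m' [w' [t' [Gm' Em']]]].
      injection Em as Em ->. injection Em' as Em' ->.
      destruct (Req_dec t t') as [<-|Nt].
      * rewrite Em, !(vadd_comm E _ (vscal t y)) in Em'.
        apply vadd_cancel_l in Em'. subst m'. rewrite (adm_fun G HG _ _ _ Gm Gm'). reflexivity.
      * exfalso. apply Hy. rewrite Em in Em'. exact (line_meets_dom _ _ _ _ _ _ Gm Gm' Em' Nt).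
    + intros e1 v1 e2 v2 a [m1 [w1 [t1 [G1 E1]]]] [m2 [w2 [t2 [G2 E2]]]].
      injection E1 as -> ->. injection E2 as -> ->.
      exists (vadd m1 (vscal a m2)), (w1 + a * w2), (t1 + a * t2).
      split; [exact (adm_lin G HG _ _ _ _ a G1 G2)|].
      rewrite vscal_distr_r, vscal_assoc, vaddACA, <- vscal_distr_l. f_equal. ring.
    + intros t. exists (vscal t z), t, 0. split; [apply (adm_line G HG)|].
      rewrite vscal_0l, vadd_0r, Rmult_0_l, Rplus_0_r. reflexivity.
    + intros e v [m [w [t [Gm Em]]]] HK. injection Em as -> ->. exact (Hal m w t Gm HK).
  - exists (0 + 1 * al), v0, 0, 1. split; [exact (adm_zero G HG)|].
    rewrite vadd_zero, vscal_one. reflexivity.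
Qed.

End Extension.

(* [Zorn_bigcup] also sees the empty chain, whose union is the empty graph,
   so empty graphs are admitted alongside the admissible ones. *)
Lemma chain_union_admissible (F : (E * R -> Prop) -> Prop) :
  (forall G, F G -> (forall p, ~ G p) \/ admissible G) ->
  classical_sets.total_on F classical_sets.subset ->
  (exists G, F G /\ admissible G) ->
  admissible (fun p => exists2 G, F G & G p).
Proof.
  intros HF Htot [G0 [FG0 HG0]].
  assert (Hmem : forall G p, F G -> G p -> admissible G).
  { intros G p FG Gp. destruct (HF G FG) as [Hempty|HG]; [exfalso; exact (Hempty p Gp)|exact HG]. }
  assert (Hjoin : forall G1 G2 p1 p2, F G1 -> F G2 -> G1 p1 -> G2 p2 ->
            exists G, F G /\ admissible G /\ G p1 /\ G p2).
  { intros G1 G2 p1 p2 F1 F2 H1 H2.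
    destruct (Htot G1 G2 F1 F2) as [S|S].
    - exists G2. refine (conj F2 (conj (Hmem _ _ F2 H2) (conj (S _ H1) H2))).
    - exists G1. refine (conj F1 (conj (Hmem _ _ F1 H1) (conj H1 (S _ H2)))). }
  split.
  - intros e v1 v2 [G1 F1 H1] [G2 F2 H2].
    destruct (Hjoin _ _ _ _ F1 F2 H1 H2) as [G [_ [HG [H1' H2']]]].
    exact (adm_fun G HG _ _ _ H1' H2').
  - intros e1 v1 e2 v2 a [G1 F1 H1] [G2 F2 H2].
    destruct (Hjoin _ _ _ _ F1 F2 H1 H2) as [G [FG [HG [H1' H2']]]].
    exists G; [exact FG|exact (adm_lin G HG _ _ _ _ a H1' H2')].
  - intros t. exists G0; [exact FG0|exact (adm_line G0 HG0 t)].
  - intros e v [G FG Gp]. exact (adm_bound G (Hmem _ _ FG Gp) e v Gp).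
Qed.

Theorem hahn_banach_geometric : exists phi : E -> R,
  (forall x y, phi (vadd x y) = phi x + phi y) /\
  (forall a x, phi (vscal a x) = a * phi x) /\
  phi z = 1 /\ (forall e, K e -> phi e <= 1).
Proof.
  set (P := fun G : E * R -> Prop => (forall p, ~ G p) \/ admissible G).
  destruct (@classical_sets.Zorn_bigcup _ P) as [A [PA Amax]].
  { intros F HF Htot. destruct (classic (exists G, F G /\ admissible G)) as [Hex|Hno].
    - right. exact (chain_union_admissible F HF Htot Hex).
    - left. intros p [G FG Gp]. destruct (HF G FG) as [Hempty|HG]; [exact (Hempty p Gp)|eauto]. }
  assert (HA : admissible A).
  { destruct PA as [Hempty|HA]; [exfalso|exact HA].
    apply (Amax (fun p => exists t, p = (vscal t z, t))).
    - split; [intros p Ap; destruct (Hempty p Ap)|].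
      intros Hsub. apply (Hempty (vscal 0 z, 0)), Hsub. exists 0. reflexivity.
    - right. exact line_admissible. }
  assert (Htotal : forall y, exists v, A (y, v)).
  { intros y. apply NNPP. intros Hy.
    destruct (admissible_extend A y HA Hy) as [G' [HAG' [HG' [v Hv]]]].
    apply (Amax G').
    - split; [exact HAG'|]. intros Hsub. exact (Hy (ex_intro _ v (Hsub _ Hv))).
    - right. exact HG'. }
  set (phi := fun e => epsilon (inhabits 0) (fun v => A (e, v))).
  assert (Hphi : forall e, A (e, phi e)) by (intros e; apply epsilon_spec, Htotal).
  assert (Hval : forall e v, A (e, v) -> phi e = v)
    by (intros e v H; exact (adm_fun A HA _ _ _ (Hphi e) H)).
  exists phi. split; [|split; [|split]].
  - intros x y. apply Hval.
    pose proof (adm_lin A HA _ _ _ _ 1 (Hphi x) (Hphi y)) as H.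
    rewrite vscal_one, Rmult_1_l in H. exact H.
  - intros a x. apply Hval, adm_scal; [exact HA|apply Hphi].
  - apply Hval. pose proof (adm_line A HA 1) as H. rewrite vscal_one in H. exact H.
  - intros e HK. exact (adm_bound A HA _ _ (Hphi e) HK).
Qed.

End HahnBanach.

Section LCSFacts.
Variable X : LCS.

Lemma scal_0l (u : X) : scal 0 u = zero.
Proof. exact (vscal_0l (VS_of_LCS X) u). Qed.

Lemma scal_0r (a : R) : scal a (@zero X) = zero.
Proof. exact (vscal_0r (VS_of_LCS X) a). Qed.

Lemma add_0r (u : X) : add u zero = u.
Proof. exact (vadd_0r (VS_of_LCS X) u). Qed.

Lemma opp_scal (u : X) : opp u = scal (-1) u.
Proof. exact (vopp_scal (VS_of_LCS X) u). Qed.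

Lemma open_line (V : X -> Prop) (p u : X) : is_open V -> V p ->
  exists dl, 0 < dl /\ forall t, Rabs t < dl -> V (add p (scal t u)).
Proof.
  intros HV Hp. rewrite <- (add_0r p), <- (scal_0l u) in Hp.
  destruct (add_cont X V p (scal 0 u) HV Hp) as [A [B [HA [HB [Ap [Bu HAB]]]]]].
  destruct (scal_cont X B 0 u HB Bu) as [dl [W [Hdl [HW [Wu HWB]]]]].
  exists dl. split; [exact Hdl|]. intros t Ht.
  apply HAB; [exact Ap|]. apply HWB; [rewrite Rminus_0_r; exact Ht|exact Wu].
Qed.

Lemma open_affine_preimage (V : X -> Prop) (p : X) (c : R) (x : X) : is_open V -> V p ->
  exists O, is_open O /\ O x /\ forall y, O y -> V (add p (scal c (add y (opp x)))).
Proof.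
  intros HV Hp. rewrite <- (add_0r p), <- (scal_0r c), <- (add_opp X x) in Hp.
  destruct (add_cont X V _ _ HV Hp) as [A [B [HA [HB [Ap [Bq HAB]]]]]].
  destruct (scal_cont X B c _ HB Bq) as [dl [W [Hdl [HW [Wu HWB]]]]].
  destruct (add_cont X W _ _ HW Wu) as [O [O' [HO [HO' [Ox [O'x HOO']]]]]].
  exists O. split; [exact HO|split; [exact Ox|]]. intros y Hy.
  apply HAB; [exact Ap|]. apply HWB; [rewrite Rminus_diag, Rabs_R0; exact Hdl|].
  exact (HOO' _ _ Hy O'x).
Qed.

Lemma linear_continuous_of_lower_bound (f : X -> R) (V : X -> Prop) (p : X) :
  (forall x y, f (add x y) = f x + f y) -> (forall a x, f (scal a x) = a * f x) ->
  is_open V -> V p -> (forall w, V (add p w) -> - 1 <= f w) ->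
  forall x eps, 0 < eps ->
    exists U, is_open U /\ U x /\ (forall y, U y -> Rabs (f y - f x) < eps).
Proof.
  intros fadd fscal HV Vp fbnd x eps Heps.
  set (c := 2 / eps).
  assert (Hc : c * eps = 2) by (unfold c; field; lra).
  destruct (open_affine_preimage V p c x HV Vp) as [O1 [HO1 [O1x HO1']]].
  destruct (open_affine_preimage V p (- c) x HV Vp) as [O2 [HO2 [O2x HO2']]].
  exists (fun y => O1 y /\ O2 y). split; [apply open_inter; assumption|split; [split; assumption|]].
  intros y [Y1 Y2].
  pose proof (fbnd _ (HO1' y Y1)) as F1. pose proof (fbnd _ (HO2' y Y2)) as F2.
  rewrite fscal, fadd, opp_scal, fscal in F1, F2.
  apply Rabs_lt_iff. split; nra.
Qed.

End LCSFacts.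

Lemma epi_convex (X : LCS) (g : X -> Rbar) (x x' : X) (s s' t : R) :
  convex_fun g -> 0 <= t <= 1 -> Rbar_le (g x) (Fin s) -> Rbar_le (g x') (Fin s') ->
  Rbar_le (g (add (scal t x) (scal (1 - t) x'))) (Fin (t * s + (1 - t) * s')).
Proof.
  intros hconvex Ht H1 H2.
  destruct (Req_dec t 0) as [->|N0].
  { rewrite scal_0l, add_zero, Rminus_0_r, scal_one.
    replace (0 * s + 1 * s') with s' by ring. exact H2. }
  destruct (Req_dec t 1) as [->|N1].
  { rewrite Rminus_diag, scal_0l, add_0r, scal_one.
    replace (1 * s + 0 * s') with s by ring. exact H1. }
  eapply Rbar_le_trans; [apply hconvex; lra|].
  destruct (g x), (g x'); simpl in *; try tauto. nra.
Qed.

Section Separation.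
Variables (X : LCS) (g : X -> Rbar).
Hypothesis hconvex : convex_fun g.
Variables (x0 x1 : X) (rho s1 d : R) (V : X -> Prop).
Hypotheses (Hx1 : Rbar_le (g x1) (Fin s1)) (HV : is_open V) (Vx0 : V x0) (Hd : 0 < d).
Hypothesis V_convex : forall y y' t, 0 <= t <= 1 -> V y -> V y' ->
  V (add (scal t y) (scal (1 - t) y')).
Hypothesis V_below : forall y s, V y -> Rabs (s - rho) < d -> ~ Rbar_le (g y) (Fin s).

Let E := VS_prodR (VS_of_LCS X).
Let c1 : E := (x1, s1).

Definition sep_box (n : E) : Prop := V (add x0 (fst n)) /\ Rabs (snd n) < d.

(* The epigraph, translated so that it contains [0] and thickened by the open
   box [sep_box] around [0]: a convex absorbing set avoiding [(x0, rho) - c1]. *)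
Definition sep_set (e : E) : Prop :=
  exists n, sep_box n /\
    let p := vadd (vadd e c1) n in Rbar_le (g (fst p)) (Fin (snd p)).

Lemma sep_box_absorbing (e : E) : exists t, 0 < t /\ sep_box (vscal (- t) e).
Proof.
  destruct e as [u s]. destruct (open_line X V x0 u HV Vx0) as [dl [Hdl Hl]].
  pose proof (Rabs_pos s) as Hs.
  set (q := d / (Rabs s + 1)).
  assert (Hq : 0 < q) by (apply Rdiv_lt_0_compat; lra).
  assert (Hqs : q * (Rabs s + 1) = d) by (unfold q; field; lra).
  set (t := Rmin dl q / 2).
  assert (Ht0 : 0 < t) by (unfold t; pose proof (Rmin_glb_lt dl q 0 Hdl Hq); lra).
  assert (Ht1 : t < dl) by (unfold t; pose proof (Rmin_l dl q); lra).
  assert (Ht2 : t < q) by (unfold t; pose proof (Rmin_r dl q); lra).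
  exists t. split; [exact Ht0|split; simpl].
  - apply Hl. rewrite Rabs_Ropp, Rabs_pos_eq; lra.
  - rewrite Rabs_mult, Rabs_Ropp, (Rabs_pos_eq t) by lra. nra.
Qed.

Lemma sep_box_convex (n n' : E) (t : R) : 0 <= t <= 1 -> sep_box n -> sep_box n' ->
  sep_box (vcomb t n n').
Proof.
  destruct n as [w s], n' as [w' s']. intros Ht [Vw Sw] [Vw' Sw']. simpl in *. split.
  - pose proof (V_convex _ _ t Ht Vw Vw') as H.
    pose proof (vcombDD (VS_of_LCS X) t x0 w x0 w') as Hc.
    rewrite vcombxx in Hc. unfold vcomb in Hc. simpl in Hc. rewrite Hc in H. exact H.
  - apply Rabs_lt_iff. apply Rabs_lt_iff in Sw, Sw'. simpl. split.
    + pose proof (Rconvex_lt (- s) (- s') t d Ht ltac:(lra) ltac:(lra)). lra.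
    + apply Rconvex_lt; lra.
Qed.

Lemma sep_set_convex (e e' : E) (t : R) : 0 <= t <= 1 -> sep_set e -> sep_set e' ->
  sep_set (vcomb t e e').
Proof.
  intros Ht [n [Nn Cn]] [n' [Nn' Cn']].
  exists (vcomb t n n'). split; [exact (sep_box_convex n n' t Ht Nn Nn')|].
  replace (vadd (vadd (vcomb t e e') c1) (vcomb t n n'))
    with (vcomb t (vadd (vadd e c1) n) (vadd (vadd e' c1) n'))
    by (rewrite !vcombDD, vcombxx; reflexivity).
  revert Cn Cn'. generalize (vadd (vadd e c1) n) (vadd (vadd e' c1) n').
  intros [px ps] [qx qs]. simpl. intros Cp Cq. exact (epi_convex X g px qx ps qs t hconvex Ht Cp Cq).
Qed.

Lemma sep_set_absorbing (e : E) : exists t, 0 < t /\ sep_set (vscal t e).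
Proof.
  destruct (sep_box_absorbing e) as [t [Ht Nt]]. exists t. split; [exact Ht|].
  exists (vscal (- t) e). split; [exact Nt|].
  rewrite (vadd_comm E (vscal t e)), vadd_scalK. exact Hx1.
Qed.

Lemma sep_set_avoids : ~ sep_set (vadd ((x0, rho) : E) (vopp c1)).
Proof.
  intros [[w s] [[Vw Sw] Cw]]. rewrite vaddNK in Cw. simpl in Vw, Sw, Cw.
  apply (V_below (add x0 w) (rho + s) Vw); [|exact Cw].
  replace (rho + s - rho) with s by ring. exact Sw.
Qed.

Lemma epi_separation_in_box : exists (f : dual X) (a c : R),
  (forall x s, Rbar_le (g x) (Fin s) -> f x + a * s <= c) /\ c < f x0 + a * rho.
Proof.
  set (z := vadd ((x0, rho) : E) (vopp c1)).
  destruct (hahn_banach_geometric E sep_set z sep_set_convex sep_set_absorbing sep_set_avoids)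
    as [phi [Padd [Pscal [Pz PK]]]].
  set (f := fun x : X => phi ((x, 0) : E)).
  assert (fadd : forall x y, f (add x y) = f x + f y).
  { intros x y. unfold f. rewrite <- Padd. simpl. rewrite Rplus_0_r. reflexivity. }
  assert (fscal : forall a x, f (scal a x) = a * f x).
  { intros a x. unfold f. rewrite <- Pscal. simpl. rewrite Rmult_0_r. reflexivity. }
  assert (fbnd : forall w, V (add x0 w) -> - 1 <= f w).
  { intros w Hw.
    assert (HK : sep_set (vscal (-1) ((w, 0) : E))).
    { exists (vscal (- -1) ((w, 0) : E)). split.
      - unfold sep_box. simpl. replace (- -1) with 1 by ring.
        rewrite scal_one, Rmult_0_r, Rabs_R0. split; assumption.
      - rewrite (vadd_comm E (vscal (-1) _)), vadd_scalK. exact Hx1. }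
    apply PK in HK. rewrite Pscal in HK. unfold f. lra. }
  set (fd := Build_dual X f fadd fscal
               (linear_continuous_of_lower_bound X f V x0 fadd fscal HV Vx0 fbnd)).
  set (a := phi ((zero, 1) : E)).
  assert (Hphi : forall (x : X) s, phi ((x, s) : E) = f x + a * s).
  { intros x s. unfold f, a. rewrite (Rmult_comm _ s), <- Pscal, <- Padd. simpl.
    rewrite scal_0r, add_0r, Rplus_0_l, Rmult_1_r. reflexivity. }
  destruct (sep_box_absorbing z) as [t [Ht Nt]].
  exists fd, a, (phi ((x0, rho) : E) - t). split.
  - intros x s Hxs.
    assert (HK : sep_set (vadd (vadd ((x, s) : E) (vopp c1)) (vscal t z))).
    { exists (vscal (- t) z). split; [exact Nt|].
      rewrite vaddAC, vadd_scalK, vaddNK. exact Hxs. }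
    apply PK in HK. rewrite !Padd, Pscal, Pz in HK. unfold z in Pz. rewrite Padd in Pz.
    change (fd x) with (f x). rewrite <- Hphi. lra.
  - change (fd x0) with (f x0). rewrite <- Hphi. lra.
Qed.

End Separation.

Lemma epi_separation (X : LCS) (g : X -> Rbar) (x0 x1 : X) (rho s1 : R) :
  closed_fun g -> convex_fun g ->
  ~ Rbar_le (g x0) (Fin rho) -> Rbar_le (g x1) (Fin s1) ->
  exists (f : dual X) (a c : R),
    (forall x s, Rbar_le (g x) (Fin s) -> f x + a * s <= c) /\ c < f x0 + a * rho.
Proof.
  intros hclosed hconvex Hx0 Hx1.
  destruct (hclosed x0 rho Hx0) as [U [d [HU [Ux0 [Hd Hsep]]]]].
  destruct (locally_convex X U x0 HU Ux0) as [V [HV [Vx0 [VU Vconv]]]].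
  apply (epi_separation_in_box X g hconvex x0 x1 rho s1 d V Hx1 HV Vx0 Hd Vconv).
  intros y s Vy Hs. exact (Hsep y s (VU y Vy) Hs).
Qed.

Definition dual_zero (X : LCS) : dual X.
Proof.
  refine (Build_dual X (fun _ => 0) _ _ _); intros; try ring.
  exists (fun _ => True). split; [apply open_full|split; [exact I|]].
  intros y _. rewrite Rminus_diag, Rabs_R0. assumption.
Defined.

Definition dual_scale (X : LCS) (k : R) (f : dual X) : dual X.
Proof.
  refine (Build_dual X (fun x => k * f x) _ _ _).
  - intros. rewrite dfun_add. ring.
  - intros. rewrite dfun_scal. ring.
  - intros x eps Heps.
    pose proof (Rabs_pos k) as Hk.
    destruct (dfun_cont X f x (eps / (Rabs k + 1))) as [U [HU [Ux HUx]]].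
    { apply Rdiv_lt_0_compat; lra. }
    exists U. split; [exact HU|split; [exact Ux|]]. intros y Hy.
    specialize (HUx y Hy).
    assert (He : eps / (Rabs k + 1) * (Rabs k + 1) = eps) by (field; lra).
    replace (k * f y - k * f x) with (k * (f y - f x)) by ring.
    rewrite Rabs_mult. pose proof (Rabs_pos (f y - f x)). nra.
Defined.

Section Conjugate.
Variables (X : LCS) (g : X -> Rbar).

Lemma biconj_le (x : X) : Rbar_le (biconj_fun g x) (g x).
Proof.
  apply Rbar_sup_least. intros v [xi [r ->]].
  apply Rbar_idiff_le_swap, Rbar_sup_ub. exists x. reflexivity.
Qed.

Lemma conj_empty_epi (xi : dualtri X) (r : R) :
  (forall x s, ~ Rbar_le (g x) (Fin s)) -> conj_fun g xi r = MInf.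
Proof.
  intros Hempty. apply Rbar_le_MInf, Rbar_sup_least. intros v [x ->].
  destruct (g x) as [b| |] eqn:Hg; [exfalso|destruct (xi_r xi r x); exact I|exfalso].
  - apply (Hempty x b). rewrite Hg. simpl. lra.
  - apply (Hempty x 0). rewrite Hg. exact I.
Qed.

Lemma conj_le_of_minorant (f : dual X) (r : R) :
  (forall x s, Rbar_le (g x) (Fin s) -> f x - r <= s) ->
  Rbar_le (conj_fun g (Plain f) r) (Fin 0).
Proof.
  intros Hmin. apply Rbar_sup_least. intros v [x ->].
  destruct (g x) as [b| |] eqn:Hg; simpl; trivial.
  - assert (H := Hmin x b ltac:(rewrite Hg; simpl; lra)). lra.
  - assert (H := Hmin x (f x - r - 1) ltac:(rewrite Hg; exact I)). lra.
Qed.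

(* A vertical hyperplane bounding the epigraph makes [\hat f] equal to [-oo]
   on the domain of [g]. *)
Lemma conj_hat_MInf (f : dual X) (c : R) :
  (forall x s, Rbar_le (g x) (Fin s) -> f x <= c) -> conj_fun g (Hat f) c = MInf.
Proof.
  intros Hbound. apply Rbar_le_MInf, Rbar_sup_least. intros v [x ->]. simpl.
  destruct (g x) as [b| |] eqn:Hg.
  - assert (H := Hbound x b ltac:(rewrite Hg; simpl; lra)).
    destruct (Rle_dec (f x - c) 0); simpl; trivial. lra.
  - destruct (Rle_dec (f x - c) 0); exact I.
  - assert (H := Hbound x 0 ltac:(rewrite Hg; exact I)).
    destruct (Rle_dec (f x - c) 0); simpl; trivial. lra.
Qed.

Lemma separation_slope_nonpos (f : dual X) (a c : R) (x1 : X) (s1 : R) :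
  Rbar_le (g x1) (Fin s1) -> (forall x s, Rbar_le (g x) (Fin s) -> f x + a * s <= c) ->
  a <= 0.
Proof.
  intros Hx1 Hsep. apply Rnot_lt_le. intros Hpos.
  set (s := Rmax s1 ((c - f x1) / a + 1)).
  assert (H := Hsep x1 s ltac:(apply (Rbar_le_trans _ _ _ Hx1); simpl; apply Rmax_l)).
  assert (H2 : (c - f x1) / a + 1 <= s) by apply Rmax_r.
  assert (H3 : a * ((c - f x1) / a + 1) = c - f x1 + a) by (field; lra).
  nra.
Qed.

(* Dividing by [-a] turns the separating hyperplane into an affine minorant. *)
Lemma biconj_term_of_separation (f : dual X) (a c : R) (x0 : X) (rho : R) : a < 0 ->
  (forall x s, Rbar_le (g x) (Fin s) -> f x + a * s <= c) -> c < f x0 + a * rho ->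
  exists xi r, ~ Rbar_le (Rbar_idiff (xi_r xi r x0) (conj_fun g xi r)) (Fin rho).
Proof.
  intros Hneg Hsep Hpt.
  set (k := / (- a)).
  assert (Hk : k * (- a) = 1) by (unfold k; field; lra).
  assert (Hk0 : 0 < k) by (unfold k; apply Rinv_0_lt_compat; lra).
  exists (Plain (dual_scale X k f)), (c * k).
  assert (Hc : Rbar_le (conj_fun g (Plain (dual_scale X k f)) (c * k)) (Fin 0)).
  { apply conj_le_of_minorant. intros x s Hxs. simpl.
    assert (H : k * (f x - c) <= k * (- a * s))
      by (apply Rmult_le_compat_l; [lra|pose proof (Hsep x s Hxs); lra]).
    replace (k * (- a * s)) with s in H by (rewrite <- Rmult_assoc, Hk; ring). lra. }
  assert (H : k * (- a * rho) < k * (f x0 - c)) by (apply Rmult_lt_compat_l; lra).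
  replace (k * (- a * rho)) with rho in H by (rewrite <- Rmult_assoc, Hk; ring).
  destruct (conj_fun g (Plain (dual_scale X k f)) (c * k)); simpl in *; try tauto. lra.
Qed.

Hypotheses (hclosed : closed_fun g) (hconvex : convex_fun g).

Lemma biconj_above_level (x0 : X) (rho : R) : ~ Rbar_le (g x0) (Fin rho) ->
  exists xi r, ~ Rbar_le (Rbar_idiff (xi_r xi r x0) (conj_fun g xi r)) (Fin rho).
Proof.
  intros Hx0.
  destruct (classic (exists x1 s1, Rbar_le (g x1) (Fin s1))) as [[x1 [s1 Hx1]]|Hn].
  2:{ exists (Plain (dual_zero X)), 0.
      rewrite conj_empty_epi; [simpl; tauto|]. intros x s Hxs. eauto. }
  destruct (epi_separation X g x0 x1 rho s1 hclosed hconvex Hx0 Hx1) as [f [a [c [Hsep Hpt]]]].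
  destruct (Rle_lt_or_eq_dec a 0 (separation_slope_nonpos f a c x1 s1 Hx1 Hsep)) as [Hneg | ->].
  - exact (biconj_term_of_separation f a c x0 rho Hneg Hsep Hpt).
  - exists (Hat f), c. rewrite conj_hat_MInf.
    + simpl. destruct (Rle_dec (f x0 - c) 0); simpl; [lra|tauto].
    + intros x s Hxs. pose proof (Hsep x s Hxs). lra.
Qed.

Lemma le_biconj (x : X) : Rbar_le (g x) (biconj_fun g x).
Proof.
  apply NNPP. intros Hn.
  destruct (Rbar_not_le_between _ _ Hn) as [rho [Hx Hb]].
  destruct (biconj_above_level x rho Hx) as [xi [r H]].
  apply H. eapply Rbar_le_trans; [|exact Hb].
  apply Rbar_sup_ub. exists xi, r. reflexivity.
Qed.

End Conjugate.

Theorem mainTheorem12 (X : LCS) (g : X -> Rbar)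
  (hclosed : closed_fun g) (hconvex : convex_fun g) :
  forall x : X, biconj_fun g x = g x.
Proof.
  intros x. apply Rbar_le_antisym; [apply biconj_le|apply le_biconj; assumption].
Qed.
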